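(* Let $k\geq 3$ be an odd integer and let $G$ be a bipartite graph. If $|V(G)|$ is odd, then $mp^{k}(G)=smp^{k}(G)=0$. If $|V(G)|$ is even, then $mp^{k}(G)=mp(G)$ and $smp^{k}(G)\leq smp(G)$.
   Context: All graphs are finite and simple; $\Gamma(v)$ is the set of edges incident with $v$. An integer $k$-matching of $G$ is a function $h:E(G)\to\{0,1,\dots,k\}$ with $\sum_{e\in\Gamma(v)}h(e)\leq k$ for all $v$; it is perfect if every vertex has $\sum_{e\in\Gamma(v)}h(e)=k$, and almost perfect if exactly one vertex $v'$ has $\sum_{e\in\Gamma(v')}h(e)=k-1$ and all other vertices have sum $k$. For $F\subseteq V(G)\cup E(G)$, $G-F$ is obtained by deleting the vertices of $F$ (with incident edges) and the edges of $F$. $mp^{k}(G)$ (resp. $smp^{k}(G)$) is the minimum size of a set $F\subseteq E(G)$ (resp. $F\subseteq V(G)\cup E(G)$) such that $G-F$ has neither a perfect nor an almost perfect integer $k$-matching. $mp(G)$ (resp. $smp(G)$) is the minimum size of a set $F\subseteq E(G)$ (resp. $F\subseteq V(G)\cup E(G)$) such that $G-F$ has neither a perfect matching nor an almost perfect matching (a matching leaving exactly one vertex unsaturated). *)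

From mathcomp Require Import all_boot.
Set Implicit Arguments. Unset Strict Implicit. Unset Printing Implicit Defensive.

(* A finite simple graph on vertex set V : {set T} (T a finType), with edge set
   E : {set {set T}} consisting of 2-element subsets of V. *)
Definition wf_graph (T : finType) (V : {set T}) (E : {set {set T}}) : Prop :=
  forall e, e \in E -> e \subset V /\ #|e| = 2.

Definition bipartite (T : finType) (V : {set T}) (E : {set {set T}}) : Prop :=
  exists A B : {set T}, A :&: B = set0 /\ A :|: B = V /\
    forall e, e \in E -> #|e :&: A| = 1 /\ #|e :&: B| = 1.

(* G - F, for F = FV (vertices) union FE (edges) *)
Definition delV (T : finType) (V FV : {set T}) : {set T} := V :\: FV.
Definition delE (T : finType) (V FV : {set T}) (E FE : {set {set T}}) : {set {set T}} :=
  [set e in E :\: FE | e \subset V :\: FV].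

Definition hsum (T : finType) (E : {set {set T}}) (h : {set T} -> nat) (v : T) : nat :=
  \sum_(e in E | v \in e) h e.

Definition int_kmatching (T : finType) (k : nat) (V : {set T}) (E : {set {set T}})
    (h : {set T} -> nat) : Prop :=
  (forall e, e \in E -> h e <= k) /\ (forall v, v \in V -> hsum E h v <= k).

Definition has_perfect_kmatching (T : finType) (k : nat) (V : {set T}) (E : {set {set T}}) : Prop :=
  exists h, int_kmatching k V E h /\ forall v, v \in V -> hsum E h v = k.

Definition has_almost_perfect_kmatching (T : finType) (k : nat) (V : {set T}) (E : {set {set T}}) : Prop :=
  exists h, int_kmatching k V E h /\
    exists v', v' \in V /\ hsum E h v' = k.-1 /\
      forall v, v \in V -> v != v' -> hsum E h v = k.

Definition matching (T : finType) (E M : {set {set T}}) : Prop :=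
  M \subset E /\ forall e1 e2, e1 \in M -> e2 \in M -> e1 != e2 -> [disjoint e1 & e2].

Definition saturated (T : finType) (M : {set {set T}}) (v : T) : Prop :=
  exists2 e, e \in M & v \in e.

Definition has_perfect_matching (T : finType) (V : {set T}) (E : {set {set T}}) : Prop :=
  exists M, matching E M /\ forall v, v \in V -> saturated M v.

Definition has_almost_perfect_matching (T : finType) (V : {set T}) (E : {set {set T}}) : Prop :=
  exists M, matching E M /\ exists v', v' \in V /\ ~ saturated M v' /\
    forall v, v \in V -> v != v' -> saturated M v.

Definition no_pk (T : finType) (k : nat) (V : {set T}) (E : {set {set T}}) : Prop :=
  ~ has_perfect_kmatching k V E /\ ~ has_almost_perfect_kmatching k V E.

Definition no_p (T : finType) (V : {set T}) (E : {set {set T}}) : Prop :=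
  ~ has_perfect_matching V E /\ ~ has_almost_perfect_matching V E.

Definition is_mpk (T : finType) (k : nat) (V : {set T}) (E : {set {set T}}) (n : nat) : Prop :=
  (exists FE : {set {set T}}, FE \subset E /\ #|FE| = n /\ no_pk k V (delE V set0 E FE)) /\
  (forall FE : {set {set T}}, FE \subset E -> no_pk k V (delE V set0 E FE) -> n <= #|FE|).

Definition is_mp (T : finType) (V : {set T}) (E : {set {set T}}) (n : nat) : Prop :=
  (exists FE : {set {set T}}, FE \subset E /\ #|FE| = n /\ no_p V (delE V set0 E FE)) /\
  (forall FE : {set {set T}}, FE \subset E -> no_p V (delE V set0 E FE) -> n <= #|FE|).

Definition is_smpk (T : finType) (k : nat) (V : {set T}) (E : {set {set T}}) (n : nat) : Prop :=
  (exists (FV : {set T}) (FE : {set {set T}}), FV \subset V /\ FE \subset E /\ #|FV| + #|FE| = n /\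
      no_pk k (delV V FV) (delE V FV E FE)) /\
  (forall (FV : {set T}) (FE : {set {set T}}), FV \subset V -> FE \subset E ->
      no_pk k (delV V FV) (delE V FV E FE) -> n <= #|FV| + #|FE|).

Definition is_smp (T : finType) (V : {set T}) (E : {set {set T}}) (n : nat) : Prop :=
  (exists (FV : {set T}) (FE : {set {set T}}), FV \subset V /\ FE \subset E /\ #|FV| + #|FE| = n /\
      no_p (delV V FV) (delE V FV E FE)) /\
  (forall (FV : {set T}) (FE : {set {set T}}), FV \subset V -> FE \subset E ->
      no_p (delV V FV) (delE V FV E FE) -> n <= #|FV| + #|FE|).

From Stdlib Require Import Classical.
From Stdlib Require Wf_nat.
From mathcomp Require Import all_boot zify.
Set Implicit Arguments. Unset Strict Implicit. Unset Printing Implicit Defensive.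

(* Let (A, B) be a bipartition of G and h an integer k-matching. Double
   counting the edge weights from either side gives
   sum_(v in A) deg_h v = sum_(v in B) deg_h v.  Hence
   - a perfect k-matching forces #|A| = #|B|, so |V(G)| is even;
   - an almost perfect k-matching forces k * #|A| = k * #|B| +- 1, which is
     impossible for k >= 2; for k = 1 (almost perfect matchings) it forces
     |V(G)| to be odd.
   Conversely a perfect k-matching gives Hall's condition for A into B
   (the weight k * #|S| leaving S enters the neighbourhood of S), so Hall's
   marriage theorem, proved here by induction on #|A|, yields a perfect
   matching; a perfect matching with weight k is a perfect k-matching.
   Since deleting vertices and edges keeps G bipartite, for k >= 2 the two
   obstructions coincide on every even subgraph, every odd subgraph has no
   (almost) perfect k-matching, and having no (almost) perfect matching
   always implies having no (almost) perfect k-matching; the three claims of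
   the theorem follow. *)

Lemma setU_diff (T : finType) (S X : {set T}) : S \subset X -> S :|: X :\: S = X.
Proof. by move=> SX; rewrite -{2}(setID X S) (setIidPr SX). Qed.

Lemma card_meet_le1 (T : finType) (e X Y : {set T}) :
  #|e :&: Y| = 1 -> X \subset Y -> #|e :&: X| <= 1.
Proof. by move=> eY XY; rewrite -eY subset_leq_card // setIS. Qed.

Section DoubleCounting.
Variables (T : finType) (F : {set {set T}}) (h : {set T} -> nat).

Lemma sum_hsum (S : {set T}) :
  (forall e, e \in F -> #|e :&: S| <= 1) ->
  \sum_(v in S) hsum F h v = \sum_(e in F | e :&: S != set0) h e.
Proof.
move=> meet1; rewrite /hsum.
under eq_bigr do rewrite big_mkcondr /=.
rewrite exchange_big [RHS]big_mkcondr /=; apply: eq_bigr => e eF.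
rewrite -big_mkcondr /= sum_nat_const.
have -> : #|[pred v in S | v \in e]| = #|e :&: S|.
  by apply: eq_card => v; rewrite !inE andbC.
have := meet1 e eF; rewrite -card_gt0.
by case: #|e :&: S| => [|[|]]; rewrite ?mul1n.
Qed.

Lemma sum_hsum_side (X : {set T}) :
  (forall e, e \in F -> #|e :&: X| = 1) ->
  \sum_(v in X) hsum F h v = \sum_(e in F) h e.
Proof.
move=> meet1; rewrite sum_hsum => [|e /meet1 ->//].
by apply: eq_bigl => e; rewrite -card_gt0; case: (boolP (e \in F)) => // /meet1 ->.
Qed.

Lemma sum_hsum_regular (k : nat) (X : {set T}) :
  (forall v, v \in X -> hsum F h v = k) -> \sum_(v in X) hsum F h v = k * #|X|.
Proof. by move=> reg; rewrite (eq_bigr _ reg) sum_nat_const mulnC. Qed.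

Lemma sum_hsum_almost_regular (k : nat) (X : {set T}) (v' : T) :
  0 < k -> v' \in X -> hsum F h v' = k.-1 ->
  (forall v, v \in X -> v != v' -> hsum F h v = k) ->
  (\sum_(v in X) hsum F h v).+1 = k * #|X|.
Proof.
move=> k_gt0 v'X defect reg; rewrite (bigD1 v') //= defect.
rewrite (eq_bigl (mem (X :\ v'))) => [|v]; last by rewrite !inE andbC.
rewrite (@sum_hsum_regular k (X :\ v')) => [|v]; last first.
  by rewrite !inE => /andP[? ?]; apply: reg.
by rewrite (cardsD1 v' X) v'X mulnDr muln1 -addSn prednK.
Qed.

End DoubleCounting.

Definition bipartition (T : finType) (W : {set T}) (F : {set {set T}}) (A B : {set T}) : Prop :=
  [/\ A :&: B = set0, A :|: B = W &
      forall e, e \in F -> [/\ e \subset W, #|e :&: A| = 1 & #|e :&: B| = 1]].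

Lemma bipartite_subgraph (T : finType) (V : {set T}) (E : {set {set T}}) :
  bipartite V E -> forall (FV : {set T}) (FE : {set {set T}}),
  exists A B : {set T}, bipartition (delV V FV) (delE V FV E FE) A B.
Proof.
move=> [A [B [disjAB [coverV sides]]]] FV FE.
exists (A :&: (V :\: FV)), (B :&: (V :\: FV)); split.
- by rewrite setIACA disjAB set0I.
- by rewrite -setIUl coverV; apply/setIidPr; rewrite subsetDl.
- move=> e; rewrite /delE !inE => /andP[/andP[_ eE] eW].
  have [eA eB] := sides e eE.
  by rewrite !setIA !(setIidPl (subset_trans (subsetIl _ _) eW)).
Qed.

Section Bipartition.
Variables (T : finType) (W : {set T}) (F : {set {set T}}) (A B : {set T}).
Hypothesis bip : bipartition W F A B.

Lemma bipartition_apart (x : T) : x \in A -> x \in B -> False.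
Proof. by case: bip => disjAB _ _ xA xB; move/setP: disjAB => /(_ x); rewrite !inE xA xB. Qed.

Lemma bipartition_card : #|W| = #|A| + #|B|.
Proof. by case: bip => disjAB <- _; rewrite -cardsUI disjAB cards0 addn0. Qed.

Lemma bipartition_subA : A \subset W.
Proof. by case: bip => _ <- _; apply: subsetUl. Qed.

Lemma bipartition_subB : B \subset W.
Proof. by case: bip => _ <- _; apply: subsetUr. Qed.

(* Both classes carry the total edge weight. *)
Lemma bipartition_sides (h : {set T} -> nat) :
  \sum_(v in A) hsum F h v = \sum_(v in B) hsum F h v.
Proof. by case: bip => _ _ sides; rewrite !sum_hsum_side // => e /sides[]. Qed.

Lemma perfect_kmatching_balanced (k : nat) :
  0 < k -> has_perfect_kmatching k W F -> #|A| = #|B|.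
Proof.
move=> k_gt0 [h [_ perfect]].
have regular (X : {set T}) : X \subset W -> \sum_(v in X) hsum F h v = k * #|X|.
  by move=> XW; apply: sum_hsum_regular => v /(subsetP XW)/perfect.
have := bipartition_sides h.
rewrite (regular A bipartition_subA) (regular B bipartition_subB).
by move/eqP; rewrite eqn_pmul2l // => /eqP.
Qed.

Lemma almost_perfect_kmatching_unbalanced (k : nat) :
  0 < k -> has_almost_perfect_kmatching k W F ->
  k * #|A| = (k * #|B|).+1 \/ k * #|B| = (k * #|A|).+1.
Proof.
move=> k_gt0 [h [_ [v' [v'W [defect perfect]]]]].
case: (bip) => _ coverW _.
have regular (X : {set T}) : X \subset W -> v' \notin X -> \sum_(v in X) hsum F h v = k * #|X|.
  move=> XW v'X; apply: sum_hsum_regular => v vX; apply: perfect.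
    exact: (subsetP XW).
  by apply: contraNneq v'X => <-.
have almost (X : {set T}) : X \subset W -> v' \in X -> (\sum_(v in X) hsum F h v).+1 = k * #|X|.
  move=> XW v'X; apply: (sum_hsum_almost_regular k_gt0 v'X defect) => v vX.
  by apply: perfect; apply: (subsetP XW).
have sides := bipartition_sides h.
move: v'W; rewrite -coverW inE => /orP[v'A|v'B].
- left; rewrite -(almost A bipartition_subA v'A) sides regular //.
    exact: bipartition_subB.
  by apply/negP/bipartition_apart.
- right; rewrite -(almost B bipartition_subB v'B) -sides regular //.
    exact: bipartition_subA.
  by apply/negP => /bipartition_apart; apply.
Qed.

(* Hence for k >= 2 almost perfect k-matchings do not exist: k would divide 1. *)
Lemma no_almost_perfect_kmatching (k : nat) :
  2 <= k -> ~ has_almost_perfect_kmatching k W F.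
Proof.
move=> k_ge2 /(almost_perfect_kmatching_unbalanced (ltnW k_ge2)).
have k_ndvd1 a b : k * a = (k * b).+1 -> False.
  move=> eq_ab; have : k %| (k * b) + 1 by rewrite addn1 -eq_ab dvdn_mulr.
  by rewrite dvdn_addr ?dvdn_mulr // dvdn1 => /eqP k1; rewrite k1 in k_ge2.
by case=> /k_ndvd1.
Qed.

End Bipartition.

Definition matching_weight (T : finType) (k : nat) (M : {set {set T}}) (e : {set T}) : nat :=
  if e \in M then k else 0.

Section MatchingWeight.
Variables (T : finType) (F M : {set {set T}}) (k : nat).
Hypothesis match_M : matching F M.

Lemma hsum_matching_weight_saturated (v : T) :
  saturated M v -> hsum F (matching_weight k M) v = k.
Proof.
case: match_M => MF disjM [e0 e0M ve0].
rewrite /hsum (bigD1 e0) /=; last by rewrite (subsetP MF) // ve0.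
rewrite /matching_weight e0M big1 ?addn0 // => e /andP[/andP[_ ve] ne].
by case: ifP => // eM; rewrite (disjointFr (disjM _ _ eM e0M ne) ve) in ve0.
Qed.

Lemma hsum_matching_weight_unsaturated (v : T) :
  ~ saturated M v -> hsum F (matching_weight k M) v = 0.
Proof.
move=> unsat; rewrite /hsum big1 // => e /andP[_ ve].
by rewrite /matching_weight; case: ifP => // eM; case: unsat; exists e.
Qed.

End MatchingWeight.

Lemma perfect_matching_kmatching (T : finType) (k : nat) (W : {set T}) (F : {set {set T}}) :
  has_perfect_matching W F -> has_perfect_kmatching k W F.
Proof.
move=> [M [match_M sat]]; exists (matching_weight k M).
have deg v : v \in W -> hsum F (matching_weight k M) v = k.
  by move=> vW; apply: hsum_matching_weight_saturated => //; apply: sat.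
split=> //; split=> [e _|v /deg -> //]; first by rewrite /matching_weight; case: ifP.
Qed.

Lemma almost_perfect_matching_1matching (T : finType) (W : {set T}) (F : {set {set T}}) :
  has_almost_perfect_matching W F -> has_almost_perfect_kmatching 1 W F.
Proof.
move=> [M [match_M [v' [v'W [unsat' sat]]]]]; exists (matching_weight 1 M).
have deg' := hsum_matching_weight_unsaturated F 1 unsat'.
have deg v : v \in W -> v != v' -> hsum F (matching_weight 1 M) v = 1.
  by move=> vW vv'; apply: hsum_matching_weight_saturated => //; apply: sat.
split; last by exists v'.
split=> [e _|v vW]; first by rewrite /matching_weight; case: ifP.
by have [->|/(deg v vW)->] := eqVneq v v'; rewrite ?deg'.
Qed.

Lemma almost_perfect_matching_odd (T : finType) (W : {set T}) (F : {set {set T}}) (A B : {set T}) :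
  bipartition W F A B -> has_almost_perfect_matching W F -> odd #|W|.
Proof.
move=> bip /almost_perfect_matching_1matching /(almost_perfect_kmatching_unbalanced bip).
rewrite (bipartition_card bip) !mul1n => /(_ isT) [->|->].
- by rewrite addSn /= addnn odd_double.
- by rewrite addnS /= addnn odd_double.
Qed.

Section Hall.
Variables (T : finType) (R : rel T).

Definition neighbours (B S : {set T}) : {set T} := [set y in B | [exists x in S, R x y]].

Definition hall_condition (A B : {set T}) : Prop :=
  forall S : {set T}, S \subset A -> #|S| <= #|neighbours B S|.

Definition distinct_reps (A B : {set T}) (f : T -> T) : Prop :=
  (forall x, x \in A -> f x \in B /\ R x (f x)) /\ {in A &, injective f}.

Lemma neighbours_sub (B S : {set T}) : neighbours B S \subset B.
Proof. by apply/subsetP => y; rewrite inE => /andP[]. Qed.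

Lemma distinct_reps_glue (A1 A2 B1 B2 : {set T}) (f1 f2 : T -> T) :
  [disjoint B1 & B2] -> distinct_reps A1 B1 f1 -> distinct_reps A2 B2 f2 ->
  exists f, distinct_reps (A1 :|: A2) (B1 :|: B2) f.
Proof.
move=> disjB [rep1 inj1] [rep2 inj2].
exists (fun x => if x \in A1 then f1 x else f2 x).
have apart x y : x \in A1 -> y \in A2 -> f1 x != f2 y.
  move=> xA1 yA2; have [/(disjointFr disjB) f1x _] := rep1 x xA1.
  by have [f2y _] := rep2 y yA2; apply: contraFneq f1x => ->.
split=> [x|x y].
  rewrite inE; case: ifP => [xA1 _|_ /= xA2].
    by have [fB fR] := rep1 x xA1; rewrite inE fB.
  by have [fB fR] := rep2 x xA2; rewrite inE fB orbT.
rewrite !inE; case: ifP => [xA1 _|_ /= xA2]; case: ifP => [yA1 _|_ /= yA2].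
- exact: inj1.
- by move/eqP; rewrite (negbTE (apart x y xA1 yA2)).
- by move/esym/eqP; rewrite (negbTE (apart y x yA1 xA2)).
- exact: inj2.
Qed.

Lemma hall_condition_part (A B S : {set T}) :
  hall_condition A B -> S \subset A -> hall_condition S (neighbours B S).
Proof.
move=> hallAB SA S' S'S; apply: leq_trans (hallAB S' (subset_trans S'S SA)) _.
apply/subset_leq_card/subsetP => y; rewrite !inE => /andP[yB /existsP[x /andP[xS' Rxy]]].
rewrite yB /= andbC; apply/andP; split; apply/existsP; exists x; rewrite ?xS' ?Rxy //.
by rewrite (subsetP S'S).
Qed.

Lemma hall_condition_tight_rest (A B S : {set T}) :
  hall_condition A B -> S \subset A -> #|neighbours B S| <= #|S| ->
  hall_condition (A :\: S) (B :\: neighbours B S).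
Proof.
move=> hallAB SA tight S' S'A.
have disjS'S : S' :&: S = set0.
  apply/setP => x; rewrite !inE; apply/negbTE/andP => -[xS' xS].
  by move: (subsetP S'A x xS'); rewrite inE xS.
have nbU : neighbours B (S' :|: S) = neighbours B S' :|: neighbours B S.
  apply/setP => y; rewrite !inE; case: (y \in B) => //=.
  apply/existsP/orP => [[x]|[]/existsP[x /andP[xS Rxy]]].
  - by rewrite inE => /andP[/orP[] xS Rxy]; [left|right]; apply/existsP; exists x; rewrite xS.
  - by exists x; rewrite inE xS.
  - by exists x; rewrite inE xS orbT.
have nbD : neighbours (B :\: neighbours B S) S' = neighbours B S' :\: neighbours B S.
  by apply/setP => y; rewrite !inE; case: (y \in B); case: [exists x in S, R x y];
     rewrite ?andbF ?andbT.
have := hallAB (S' :|: S); rewrite subUset SA (subset_trans S'A (subsetDl _ _)) nbU nbD.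
have := cardsUI S' S; have := cardsUI (neighbours B S') (neighbours B S).
have := cardsID (neighbours B S) (neighbours B S'); rewrite disjS'S cards0.
(* #|S'| + #|S| <= #|N S' :|: N S| = #|N S' :\: N S| + #|N S| <= #|N S' :\: N S| + #|S| *)
move: tight; lia.
Qed.

Lemma hall_condition_surplus_rest (A B : {set T}) (a b : T) :
  hall_condition A B ->
  (forall S : {set T}, S \subset A -> S != set0 -> S != A -> #|S| < #|neighbours B S|) ->
  a \in A -> hall_condition (A :\ a) (B :\ b).
Proof.
move=> hallAB surplus aA S SA.
have [->|S_n0] := eqVneq S set0; first by rewrite cards0.
have SA' : S \subset A := subset_trans SA (subsetDl _ _).
have S_nA : S != A.
  have aS : a \notin S by apply/negP => /(subsetP SA); rewrite !inE eqxx.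
  by apply: contraNneq aS => ->.
have nbD : neighbours (B :\ b) S = neighbours B S :\ b.
  by apply/setP => y; rewrite !inE; case: (y \in B); rewrite ?andbF ?andbT.
have := surplus S SA' S_n0 S_nA; rewrite nbD (cardsD1 b (neighbours B S)).
by case: (b \in neighbours B S) => /=; lia.
Qed.

(* The proof is by induction on #|A|: either some
   proper nonempty S of A is tight, and A splits into S and A \ S, or every
   such S has surplus, and any related pair (a, b) can be matched first. *)
Theorem hall (A B : {set T}) : hall_condition A B -> exists f, distinct_reps A B f.
Proof.
have [n ltAn] := ubnP #|A|; elim: n => // n IH in A B ltAn *; move=> hallAB.
have [A0|[a aA]] := set_0Vmem A.
  by exists id; split=> [x|x y]; rewrite A0 inE.
case: (boolP [exists S : {set T}, [&& S \subset A, S != set0, S != A &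
                                     #|neighbours B S| <= #|S|]]).
- case/existsP => S /and4P[SA S_n0 S_nA tight].
  have ltSA : #|S| < #|A| by rewrite proper_card // properEneq S_nA.
  have ltRest : #|A :\: S| < n.
    by rewrite (cardsDS SA); move: ltAn ltSA; rewrite -card_gt0 in S_n0; lia.
  have [f1 reps1] := IH S (neighbours B S) (leq_trans ltSA ltAn)
                       (hall_condition_part hallAB SA).
  have [f2 reps2] := IH _ _ ltRest (hall_condition_tight_rest hallAB SA tight).
  have disjN : [disjoint neighbours B S & B :\: neighbours B S].
    by rewrite disjoint_sym disjoints_subset setDE subsetIr.
  have := distinct_reps_glue disjN reps1 reps2.
  by rewrite !setU_diff // neighbours_sub.
- rewrite negb_exists => /forallP no_tight.
  have surplus (S : {set T}) : S \subset A -> S != set0 -> S != A -> #|S| < #|neighbours B S|.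
    by move=> SA S_n0 S_nA; have := no_tight S; rewrite SA S_n0 S_nA ltnNge.
  have := hallAB [set a]; rewrite sub1set cards1 card_gt0 => /(_ aA) /set0Pn[b].
  rewrite inE => /andP[bB /existsP[a' /andP[/set1P -> Rab]]].
  have ltRest : #|A :\ a| < n by move: ltAn; rewrite (cardsD1 a A) aA.
  have [f2 reps2] := IH _ _ ltRest (hall_condition_surplus_rest b hallAB surplus aA).
  have reps1 : distinct_reps [set a] [set b] (fun _ => b).
    by split=> [x|x y]; rewrite !inE => /eqP ->; rewrite ?eqxx // => /eqP ->.
  have disjb : [disjoint [set b] & B :\ b] by rewrite disjoints1 !inE eqxx.
  have := distinct_reps_glue disjb reps1 reps2.
  by rewrite !setD1K.
Qed.

End Hall.

Definition adjacent (T : finType) (F : {set {set T}}) : rel T :=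
  fun x y => [exists e in F, (x \in e) && (y \in e)].

Section PerfectKmatching.
Variables (T : finType) (W : {set T}) (F : {set {set T}}) (A B : {set T}).
Hypothesis bip : bipartition W F A B.

Lemma edge_ends (e : {set T}) (x y z : T) :
  e \in F -> x \in e -> x \in A -> y \in e -> y \in B -> z \in e -> z = x \/ z = y.
Proof.
case: bip => _ coverW sides eF xe xA ye yB ze; have [eW eA eB] := sides e eF.
have only (X : {set T}) (u v : T) : #|e :&: X| = 1 -> u \in e :&: X -> v \in e :&: X -> u = v.
  by move/eqP/cards1P => [w ->]; rewrite !inE => /eqP -> /eqP ->.
move: (subsetP eW z ze); rewrite -coverW inE => /orP[zA|zB].
- by left; apply: (only A _ _ eA); rewrite inE ?ze ?xe ?zA.
- by right; apply: (only B _ _ eB); rewrite inE ?ze ?ye ?zB.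
Qed.

(* A perfect k-matching (k > 0) yields Hall's condition for A into B: the
   weight k * #|S| leaving S is absorbed by the neighbours of S. *)
Lemma perfect_kmatching_hall (k : nat) :
  0 < k -> has_perfect_kmatching k W F -> hall_condition (adjacent F) A B.
Proof.
move=> k_gt0 [h [_ perfect]] S SA; set N := neighbours (adjacent F) B S.
case: (bip) => _ _ sides.
have NB : N \subset B by apply: neighbours_sub.
have regular (X : {set T}) : X \subset W -> \sum_(v in X) hsum F h v = k * #|X|.
  by move=> XW; apply: sum_hsum_regular => v /(subsetP XW)/perfect.
have edge_to_N e : e \in F -> e :&: S != set0 -> e :&: N != set0.
  move=> eF /set0Pn[x]; rewrite inE => /andP[xe xS].
  have [_ _ /eqP/cards1P[y eB]] := sides e eF.
  have : y \in e :&: B by rewrite eB inE.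
  rewrite inE => /andP[ye yB]; apply/set0Pn; exists y; rewrite !inE ye yB /=.
  by apply/existsP; exists x; rewrite xS; apply/existsP; exists e; rewrite eF xe ye.
rewrite -(leq_pmul2l k_gt0) -regular ?(subset_trans SA (bipartition_subA bip)) //.
rewrite -regular ?(subset_trans NB (bipartition_subB bip)) //.
have meetS e : e \in F -> #|e :&: S| <= 1 by move=> /sides[_ eA _]; apply: card_meet_le1 eA SA.
have meetN e : e \in F -> #|e :&: N| <= 1 by move=> /sides[_ _ eB]; apply: card_meet_le1 eB NB.
rewrite !sum_hsum //.
apply: sub_le_big => [//|m n|e /andP[eF eS]]; first exact: leq_addr.
by rewrite eF edge_to_N.
Qed.

Lemma distinct_reps_perfect_matching (f : T -> T) :
  distinct_reps (adjacent F) A B f -> #|A| = #|B| -> has_perfect_matching W F.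
Proof.
move=> [reps inj] cardAB; case: (bip) => _ coverW _.
pose g x := odflt set0 [pick e in F | (x \in e) && (f x \in e)].
have gP x : x \in A -> [/\ g x \in F, x \in g x & f x \in g x].
  move=> xA; have [_ /existsP[e0 /andP[e0F /andP[xe0 fe0]]]] := reps x xA.
  rewrite /g; case: pickP => [e /andP[eF /andP[xe fe]]|/(_ e0)] //=.
  by rewrite e0F xe0 fe0.
have g_ends x z : x \in A -> z \in g x -> z = x \/ z = f x.
  by move=> xA; have [gF xg fg] := gP x xA; apply: edge_ends => //; case: (reps x xA).
have onto : f @: A = B.
  apply/eqP; rewrite eqEcard card_in_imset // cardAB leqnn andbT.
  by apply/subsetP => _ /imsetP[x /reps[fB _] ->].
exists (g @: A); split; first split.
- by apply/subsetP => _ /imsetP[x /gP[gF _ _] ->].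
- move=> _ _ /imsetP[x1 x1A ->] /imsetP[x2 x2A ->] g12.
  rewrite -setI_eq0; apply/set0Pn => -[z]; rewrite inE => /andP[z1 z2].
  have fB x : x \in A -> f x \in B by move=> /reps[].
  suff x12 : x1 = x2 by rewrite x12 eqxx in g12.
  case: (g_ends _ _ x1A z1) (g_ends _ _ x2A z2) => -> [|] e12 //.
  + by case: (bipartition_apart bip x1A); rewrite e12 fB.
  + by case: (bipartition_apart bip x2A); rewrite -e12 fB.
  + exact: inj.
- move=> v; rewrite -coverW inE => /orP[vA|]; first by exists (g v); [apply: imset_f|case: (gP v vA)].
  by rewrite -onto => /imsetP[x xA ->]; exists (g x); [apply: imset_f|case: (gP x xA)].
Qed.

Lemma perfect_kmatching_matching (k : nat) :
  0 < k -> has_perfect_kmatching k W F <-> has_perfect_matching W F.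
Proof.
move=> k_gt0; split; last exact: perfect_matching_kmatching.
move=> pk; have [f reps] := hall (perfect_kmatching_hall k_gt0 pk).
exact: distinct_reps_perfect_matching reps (perfect_kmatching_balanced bip k_gt0 pk).
Qed.

End PerfectKmatching.

Section NoMatching.
Variables (T : finType) (k : nat) (W : {set T}) (F : {set {set T}}) (A B : {set T}).
Hypotheses (k_ge2 : 2 <= k) (bip : bipartition W F A B).

Lemma no_kmatching_of_odd : odd #|W| -> no_pk k W F.
Proof.
move=> oddW; split; last exact: (no_almost_perfect_kmatching bip k_ge2).
move/(perfect_kmatching_balanced bip (ltnW k_ge2)) => cardAB.
by move: oddW; rewrite (bipartition_card bip) cardAB addnn odd_double.
Qed.

Lemma no_matching_no_kmatching : no_p W F -> no_pk k W F.
Proof.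
move=> [no_pm _]; split; last exact: (no_almost_perfect_kmatching bip k_ge2).
by move/(perfect_kmatching_matching bip (ltnW k_ge2)).
Qed.

(* The converse holds for even order, where almost perfect matchings are
   impossible anyway. *)
Lemma no_kmatching_no_matching : ~~ odd #|W| -> no_pk k W F -> no_p W F.
Proof.
move=> evenW [no_perfect _]; split; first by move/(perfect_kmatching_matching bip (ltnW k_ge2)).
by move/(almost_perfect_matching_odd bip); apply/negP.
Qed.

End NoMatching.

Lemma least_element (P : nat -> Prop) (b : nat) :
  P b -> exists a, [/\ P a, a <= b & forall m, P m -> a <= m].
Proof.
move=> Pb; have [a [[Pa least] _]] :=
  Wf_nat.dec_inh_nat_subset_has_unique_least_element P (fun n => classic (P n)) (ex_intro _ b Pb).
by exists a; split=> // [|m /least/leP//]; apply/leP/least.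
Qed.

Lemma is_mpk_iff_is_mp (T : finType) (k : nat) (V : {set T}) (E : {set {set T}}) (n : nat) :
  (forall FE, no_pk k V (delE V set0 E FE) <-> no_p V (delE V set0 E FE)) ->
  (is_mpk k V E n <-> is_mp V E n).
Proof. by move=> same; rewrite /is_mpk /is_mp; setoid_rewrite same. Qed.

Lemma is_smpk_le (T : finType) (k : nat) (V : {set T}) (E : {set {set T}}) (b : nat) :
  (exists (FV : {set T}) (FE : {set {set T}}), FV \subset V /\ FE \subset E /\
     #|FV| + #|FE| = b /\ no_pk k (delV V FV) (delE V FV E FE)) ->
  exists a, is_smpk k V E a /\ a <= b.
Proof.
pose P m := exists (FV : {set T}) (FE : {set {set T}}), FV \subset V /\ FE \subset E /\
  #|FV| + #|FE| = m /\ no_pk k (delV V FV) (delE V FV E FE).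
move=> /(@least_element P)[a [Pa le_ab least]]; exists a; split=> //; split=> // FV FE FVV FEE nopk.
by apply: least; exists FV, FE.
Qed.

Theorem theorem3p13 (T : finType) (k : nat) (V : {set T}) (E : {set {set T}}) :
  3 <= k -> odd k -> wf_graph V E -> bipartite V E ->
  (odd #|V| -> is_mpk k V E 0 /\ is_smpk k V E 0) /\
  (~~ odd #|V| ->
     (forall n, is_mpk k V E n <-> is_mp V E n) /\
     (forall b, is_smp V E b -> exists a, is_smpk k V E a /\ a <= b)).
Proof.
move=> k_ge3 _ _ bipVE; have k_ge2 : 2 <= k := ltnW k_ge3.
have sub FV FE := bipartite_subgraph bipVE FV FE.
have edge_sub FE : exists A B, bipartition V (delE V set0 E FE) A B.
  by have := sub set0 FE; rewrite /delV setD0.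
split=> [oddV|evenV].
  have nopk FE : no_pk k V (delE V set0 E FE).
    by have [A [B bip]] := edge_sub FE; apply: no_kmatching_of_odd bip oddV.
  split; split=> [|*] //; first by exists set0; rewrite sub0set cards0.
  by exists set0, set0; rewrite !sub0set !cards0 /delV setD0.
split=> [n|b [[FV [FE [FVV [FEE [card nop]]]]] _]].
  apply: is_mpk_iff_is_mp => FE; have [A [B bip]] := edge_sub FE.
  by split; [apply: no_kmatching_no_matching bip evenV|apply: no_matching_no_kmatching bip].
apply: is_smpk_le; exists FV, FE; do 3 split=> //.
by have [A [B bip]] := sub FV FE; apply: no_matching_no_kmatching bip nop.
Qed.
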